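(* There is a constant $C_2>0$ such that for every $\ell\ge0$ and every path $p_0,p_1,\dots,p_\ell$ in the graph $G_1+G_2$, its $(G_1+G_2)$-weight $\prod_{i=1}^{\ell}(G_1+G_2)(p_{i-1},p_i)$ is at most $$C_2^{\,\ell+\max_{0\le i\le\ell}|p_i|}.$$
   Context: $\mathbb N=\{0,1,2,\dots\}$; for $t\in\mathbb R$, $\langle t\rangle:=1+|t|$. A directed weighted $\mathbb Z^2$-graph is a map $G\colon\mathbb Z^2\times\mathbb Z^2\to[0,\infty)$ ($G(p,q)$ = weight of edge $p\to q$, $0$ meaning no edge); a path of length $\ell$ is $p_0,\dots,p_\ell$ with $G(p_{i-1},p_i)>0$, and its $G$-weight is $\prod_{i=1}^\ell G(p_{i-1},p_i)$. The sum is $(G+G')(p,q)=G(p,q)+G'(p,q)$ and the product is $(G\cdot G')(p,q)=\sum_{r\in\mathbb Z^2}G(p,r)G'(r,q)$. $G_1$ is the graph whose only nonzero weights are: $G_1((k,h),(k-2,h+2))=\frac{\langle\max\{k,|h|\}\rangle}{\langle h\rangle}$ for $k\ge2$, $h\in\mathbb Z$; $G_1((k,h),(k,h))=1$ for $k\ge0$, $h\in\mathbb Z$; $G_1((k,h),(k+2,h-2))=\frac{\langle h\rangle}{\langle\max\{k,|h|\}\rangle}$ for $k\ge0$, $h\in\mathbb Z$. $G_2((k,h),(k',h'))=1$ if $k,k'\ge0$, $(k,h)\ne(k',h')$ and $(k'-k,h'-h)\in\{c_1(1,0)+c_2(-1,2): c_1,c_2\in\mathbb N\}$, and $G_2((k,h),(k',h'))=0$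 otherwise. *)

From Stdlib Require Import Reals ZArith Lia Lra ClassicalEpsilon.
Open Scope R_scope.

Definition bracket (t : R) : R := 1 + Rabs t.

Definition G1 (p q : Z * Z) : R :=
  let (k, h) := p in let (k', h') := q in
  (if (Z.eqb k' (k - 2) && Z.eqb h' (h + 2) && Z.leb 2 k)%bool
   then bracket (IZR (Z.max k (Z.abs h))) / bracket (IZR h) else 0)
  + (if (Z.eqb k' k && Z.eqb h' h && Z.leb 0 k)%bool then 1 else 0)
  + (if (Z.eqb k' (k + 2) && Z.eqb h' (h - 2) && Z.leb 0 k)%bool
     then bracket (IZR h) / bracket (IZR (Z.max k (Z.abs h))) else 0).

Definition G2_edge (p q : Z * Z) : Prop :=
  let (k, h) := p in let (k', h') := q in
  (0 <= k)%Z /\ (0 <= k')%Z /\ p <> q /\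
  exists c1 c2 : nat,
    (k' - k = Z.of_nat c1 * 1 + Z.of_nat c2 * (-1))%Z /\
    (h' - h = Z.of_nat c1 * 0 + Z.of_nat c2 * 2)%Z.

Definition G2 (p q : Z * Z) : R :=
  if excluded_middle_informative (G2_edge p q) then 1 else 0.

Definition Gsum (G G' : Z * Z -> Z * Z -> R) (p q : Z * Z) : R := G p q + G' p q.

(* A path p_0,...,p_l is encoded as p : nat -> Z*Z (values beyond l ignored). *)
Definition is_path (G : Z * Z -> Z * Z -> R) (p : nat -> Z * Z) (l : nat) : Prop :=
  forall i : nat, (1 <= i <= l)%nat -> G (p (i - 1)%nat) (p i) > 0.

Fixpoint path_weight (G : Z * Z -> Z * Z -> R) (p : nat -> Z * Z) (l : nat) : R :=
  match l with
  | O => 1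
  | S n => path_weight G p n * G (p n) (p (S n))
  end.

Definition pnorm (x : Z * Z) : R := sqrt (IZR (fst x) ^ 2 + IZR (snd x) ^ 2).

Fixpoint path_max (p : nat -> Z * Z) (l : nat) : R :=
  match l with
  | O => pnorm (p O)
  | S n => Rmax (path_max p n) (pnorm (p (S n)))
  end.

From Stdlib Require Import Reals ZArith Lia Lra Zfloor ClassicalEpsilon.
Open Scope R_scope.

(* On each line [k + h = s] the [G_1]-edges move [h] by [2], so take as potential of
   [(k, h)] the product of the up-weights [<max (s - j, |j|)> / <j>] over the rungs
   [j = h - 2, h - 4, ...] down to [-n].  An up-edge multiplies the potential by exactly
   its weight, a down-edge has weight at most 9 times the factor by which it changes the
   potential, and a [G_2]-edge (which raises both [s] and [h]) does not decrease it.
   Hence every edge weight is at most 12 times the ratio of potentials, and the weight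
   of a path in the box [|k|, |h| <= n] telescopes to at most [12^l] times the final
   potential.  The numerators of that potential are at most [1 + 3n], while its [t]
   denominators are [<j>] for [t] rungs spaced by 2, whose product is at least [t!];
   so it is at most [(1 + 3n)^t / t! <= exp (1 + 3n)]. *)

Fixpoint prod_down (f : Z -> R) (h : Z) (t : nat) : R :=
  match t with
  | O => 1
  | S t' => f (h - 2)%Z * prod_down f (h - 2) t'
  end.

Section ProdDown.

Variable f : Z -> R.

Lemma prod_down_top h t : prod_down f (h + 2) (S t) = f h * prod_down f h t.
Proof. simpl. now replace (h + 2 - 2)%Z with h by ring. Qed.

Lemma prod_down_bottom t : forall h,
  prod_down f h (S t) = prod_down f h t * f (h - 2 * Z.of_nat (S t))%Z.
Proof.
  induction t as [|t IH]; intros h.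
  - simpl. replace (h - 2 * 1)%Z with (h - 2)%Z by ring. ring.
  - change (prod_down f h (S (S t))) with (f (h - 2)%Z * prod_down f (h - 2) (S t)).
    rewrite IH.
    change (prod_down f h (S t)) with (f (h - 2)%Z * prod_down f (h - 2) t).
    replace (h - 2 - 2 * Z.of_nat (S t))%Z with (h - 2 * Z.of_nat (S (S t)))%Z by lia.
    ring.
Qed.

Lemma prod_down_ge1 (f_ge1 : forall j, 1 <= f j) t : forall h, 1 <= prod_down f h t.
Proof.
  induction t as [|t IH]; intros h; simpl; [lra|].
  pose proof (f_ge1 (h - 2)%Z); pose proof (IH (h - 2)%Z); nra.
Qed.

Lemma prod_down_extend (f_ge1 : forall j, 1 <= f j) c : forall t h,
  prod_down f h t <= prod_down f (h + 2 * Z.of_nat c) (t + c).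
Proof.
  induction c as [|c IH]; intros t h.
  - rewrite Nat.add_0_r, Z.add_0_r; lra.
  - replace (h + 2 * Z.of_nat (S c))%Z with (h + 2 * Z.of_nat c + 2)%Z by lia.
    rewrite Nat.add_succ_r, prod_down_top.
    pose proof (IH t h); pose proof (f_ge1 (h + 2 * Z.of_nat c)%Z).
    pose proof (prod_down_ge1 f_ge1 (t + c) (h + 2 * Z.of_nat c)); nra.
Qed.

Lemma prod_down_le_pow a t : forall h,
  (forall j, (h - 2 * Z.of_nat t <= j < h)%Z -> 0 <= f j <= a) ->
  0 <= prod_down f h t <= a ^ t.
Proof.
  induction t as [|t IH]; intros h Hf; simpl; [lra|].
  destruct (Hf (h - 2)%Z) as [Hf0 Hfa]; [lia|].
  destruct (IH (h - 2)%Z) as [IH0 IHa]; [intros j Hj; apply Hf; lia|].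
  split; [nra|]. apply Rmult_le_compat; lra.
Qed.

End ProdDown.

Lemma prod_down_le_compat f g :
  (forall j, 0 <= f j <= g j) -> forall t h, 0 <= prod_down f h t <= prod_down g h t.
Proof.
  intros Hfg t; induction t as [|t IH]; intros h; simpl; [lra|].
  destruct (Hfg (h - 2)%Z), (IH (h - 2)%Z).
  split; [nra | apply Rmult_le_compat; lra].
Qed.

Lemma prod_down_mult f g t : forall h,
  prod_down (fun j => f j * g j) h t = prod_down f h t * prod_down g h t.
Proof. induction t as [|t IH]; intros h; simpl; [ring | rewrite IH; ring]. Qed.

Lemma bracket_IZR z : bracket (IZR z) = IZR (1 + Z.abs z).
Proof. unfold bracket. now rewrite Rabs_Zabs, plus_IZR. Qed.

Lemma bracket_ge1 x : 1 <= bracket x.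
Proof. unfold bracket. pose proof (Rabs_pos x). lra. Qed.

Lemma bracket_IZR_ge z m : (Z.of_nat m <= Z.abs z)%Z -> INR (S m) <= bracket (IZR z).
Proof. intros. rewrite bracket_IZR, INR_IZR_INZ, Nat2Z.inj_succ. apply IZR_le. lia. Qed.

(* The two extreme rungs differ by [2t], so one of them has [<j> >= t + 1]. *)
Lemma fact_le_prod_down_bracket t : forall h,
  INR (fact t) <= prod_down (fun j => bracket (IZR j)) h t.
Proof.
  induction t as [|t IH]; intros h; [simpl; lra|].
  rewrite fact_simpl, mult_INR.
  pose proof (INR_fact_lt_0 t). pose proof (pos_INR (S t)).
  destruct (Z_le_gt_dec (Z.of_nat t) (Z.abs (h - 2))) as [Htop|Hbot].
  - change (prod_down _ h (S t))
      with (bracket (IZR (h - 2)) * prod_down (fun j => bracket (IZR j)) (h - 2) t).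
    apply Rmult_le_compat; auto with real. now apply bracket_IZR_ge.
  - rewrite prod_down_bottom, Rmult_comm.
    apply Rmult_le_compat; auto with real. apply bracket_IZR_ge. lia.
Qed.

Lemma pow_div_fact_le_exp x n : 0 <= x -> x ^ n / INR (fact n) <= exp x.
Proof.
  intros Hx.
  set (a i := / INR (fact i) * x ^ i).
  assert (Ha : forall i, 0 <= a i).
  { intros i. unfold a. pose proof (INR_fact_lt_0 i). pose proof (pow_le x i Hx).
    apply Rmult_le_pos; [left; apply Rinv_0_lt_compat|]; auto. }
  apply Rle_trans with (sum_f_R0 a n).
  - replace (x ^ n / INR (fact n)) with (a n) by (unfold a, Rdiv; ring).
    destruct n as [|n]; simpl; [lra|].
    pose proof (cond_pos_sum a n Ha). lra.
  - apply sum_incr; [exact (proj2_sig (exist_exp x)) | exact Ha].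
Qed.

Lemma exp_le_compat x y : x <= y -> exp x <= exp y.
Proof. intros [Hlt|Heq]; [left; now apply exp_increasing | now rewrite Heq; right]. Qed.

(* The [G_1]-weight of the edge [(s - j, j) -> (s - j - 2, j + 2)]. *)
Definition up_weight (s j : Z) : R :=
  bracket (IZR (Z.max (s - j) (Z.abs j))) / bracket (IZR j).

Lemma up_weight_ge1 s j : 1 <= up_weight s j.
Proof.
  unfold up_weight. pose proof (bracket_ge1 (IZR j)).
  apply Rmult_le_reg_r with (bracket (IZR j)); [lra|].
  unfold Rdiv. rewrite Rmult_assoc, Rinv_l, Rmult_1_l, Rmult_1_r by lra.
  rewrite !bracket_IZR. apply IZR_le. lia.
Qed.

Lemma up_weight_le_compat s s' j : (s <= s')%Z -> up_weight s j <= up_weight s' j.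
Proof.
  intros. unfold up_weight, Rdiv. apply Rmult_le_compat_r.
  - left. apply Rinv_0_lt_compat. pose proof (bracket_ge1 (IZR j)). lra.
  - rewrite !bracket_IZR. apply IZR_le. lia.
Qed.

Lemma up_weight_pred_le s h : up_weight s (h - 2) <= 9 * up_weight s h.
Proof.
  unfold up_weight. rewrite !bracket_IZR.
  assert (H1 : (Z.abs (Z.max (s - (h - 2)) (Z.abs (h - 2)))
                <= 2 + Z.abs (Z.max (s - h) (Z.abs h)))%Z) by lia.
  assert (H2 : (1 + Z.abs h <= 3 * (1 + Z.abs (h - 2)))%Z) by lia.
  apply Rmult_le_reg_r with (IZR (1 + Z.abs (h - 2)) * IZR (1 + Z.abs h)).
  { rewrite <- mult_IZR. apply IZR_lt. nia. }
  field_simplify; try (apply not_0_IZR; lia).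
  rewrite <- !mult_IZR. apply IZR_le. nia.
Qed.

(* The number of rungs [h - 2, h - 4, ...] not below [-n]. *)
Definition depth (n h : Z) : nat := Z.to_nat ((h + n) / 2).

Lemma depth_add n h c : (0 <= h + n)%Z ->
  depth n (h + 2 * Z.of_nat c) = (depth n h + c)%nat.
Proof.
  intros. unfold depth.
  replace (h + 2 * Z.of_nat c + n)%Z with (h + n + Z.of_nat c * 2)%Z by ring.
  rewrite Z_div_plus by lia.
  assert (0 <= (h + n) / 2)%Z by (apply Z.div_pos; lia). lia.
Qed.

Lemma depth_lower n h : (- n <= h)%Z -> (- n <= h - 2 * Z.of_nat (depth n h))%Z.
Proof.
  intros. unfold depth.
  assert (0 <= (h + n) / 2)%Z by (apply Z.div_pos; lia).
  pose proof (Z.mul_div_le (h + n) 2 ltac:(lia)). lia.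
Qed.

Definition potential (n : Z) (x : Z * Z) : R :=
  prod_down (up_weight (fst x + snd x)) (snd x) (depth n (snd x)).

Lemma potential_ge1 n x : 1 <= potential n x.
Proof. apply prod_down_ge1, up_weight_ge1. Qed.

Lemma potential_up n k h : (0 <= h + n)%Z ->
  potential n (k - 2, h + 2)%Z = up_weight (k + h) h * potential n (k, h).
Proof.
  intros. unfold potential; cbn [fst snd].
  replace (k - 2 + (h + 2))%Z with (k + h)%Z by ring.
  replace (h + 2)%Z with (h + 2 * Z.of_nat 1)%Z at 2 by reflexivity.
  rewrite depth_add, Nat.add_1_r by lia.
  apply prod_down_top.
Qed.

Lemma potential_G2_mono n p q : G2_edge p q -> (0 <= snd p + n)%Z ->
  potential n p <= potential n q.
Proof.
  destruct p as [k h], q as [k' h'].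
  intros (_ & _ & _ & c1 & c2 & Ek & Eh) Hn. cbn [snd] in Hn.
  unfold potential; cbn [fst snd].
  replace h' with (h + 2 * Z.of_nat c2)%Z by lia.
  rewrite depth_add by lia.
  apply Rle_trans with (prod_down (up_weight (k + h)) (h + 2 * Z.of_nat c2) (depth n h + c2)).
  - apply prod_down_extend, up_weight_ge1.
  - apply prod_down_le_compat. intros j. pose proof (up_weight_ge1 (k + h) j).
    split; [lra|]. apply up_weight_le_compat. lia.
Qed.

Lemma potential_le_exp n k h : (Z.abs k <= n)%Z -> (Z.abs h <= n)%Z ->
  potential n (k, h) <= exp (1 + 3 * IZR n).
Proof.
  intros Hk Hh. unfold potential; cbn [fst snd].
  set (t := depth n h). set (a := 1 + 3 * IZR n).
  assert (Ht : (- n <= h - 2 * Z.of_nat t)%Z) by (apply depth_lower; lia).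
  assert (Hnum : prod_down (up_weight (k + h)) h t
                 * prod_down (fun j => bracket (IZR j)) h t <= a ^ t).
  { rewrite <- prod_down_mult. apply prod_down_le_pow. intros j Hj.
    assert (E : up_weight (k + h) j * bracket (IZR j)
                = bracket (IZR (Z.max (k + h - j) (Z.abs j)))).
    { unfold up_weight. field. pose proof (bracket_ge1 (IZR j)). lra. }
    rewrite E. split; [pose proof (bracket_ge1 (IZR (Z.max (k + h - j) (Z.abs j)))); lra|].
    unfold a. rewrite bracket_IZR.
    replace (1 + 3 * IZR n) with (IZR (1 + 3 * n)) by (rewrite plus_IZR, mult_IZR; ring).
    apply IZR_le. lia. }
  pose proof (fact_le_prod_down_bracket t h) as Hden.
  pose proof (INR_fact_lt_0 t).
  pose proof (prod_down_ge1 _ (up_weight_ge1 (k + h)) t h).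
  apply Rle_trans with (a ^ t / INR (fact t)).
  - apply Rmult_le_reg_r with (INR (fact t)); [lra|].
    unfold Rdiv. rewrite Rmult_assoc, Rinv_l, Rmult_1_r by lra. nra.
  - apply pow_div_fact_le_exp. unfold a.
    assert (0 <= IZR n) by (apply IZR_le; lia). lra.
Qed.

Lemma G1_le_potential_ratio n p q : (- n <= snd p)%Z -> (- n <= snd q)%Z ->
  G1 p q <= 11 * (potential n q / potential n p).
Proof.
  destruct p as [k h], q as [k' h']. cbn [snd]. intros Hp Hq.
  pose proof (potential_ge1 n (k, h)). pose proof (potential_ge1 n (k', h')).
  set (r := potential n (k', h') / potential n (k, h)).
  assert (Hr : 0 < r) by (apply Rdiv_lt_0_compat; lra).
  unfold G1.
  assert (Hup : (if ((k' =? k - 2) && (h' =? h + 2) && (2 <=? k))%Z%bool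
                 then bracket (IZR (Z.max k (Z.abs h))) / bracket (IZR h) else 0) <= r).
  { destruct ((k' =? k - 2) && (h' =? h + 2) && (2 <=? k))%Z%bool eqn:E;
      [|lra].
    rewrite !Bool.andb_true_iff, !Z.eqb_eq in E. destruct E as [[-> ->] _].
    unfold r. rewrite potential_up by lia.
    replace (Z.max k (Z.abs h)) with (Z.max (k + h - h) (Z.abs h)) by (f_equal; ring).
    right. fold (up_weight (k + h) h). field. lra. }
  assert (Hstay : (if ((k' =? k) && (h' =? h) && (0 <=? k))%Z%bool then 1 else 0) <= r).
  { destruct ((k' =? k) && (h' =? h) && (0 <=? k))%Z%bool eqn:E;
      [|lra].
    rewrite !Bool.andb_true_iff, !Z.eqb_eq in E. destruct E as [[-> ->] _].
    unfold r. right. field. lra. }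
  assert (Hdown : (if ((k' =? k + 2) && (h' =? h - 2) && (0 <=? k))%Z%bool
                   then bracket (IZR h) / bracket (IZR (Z.max k (Z.abs h))) else 0) <= 9 * r).
  { destruct ((k' =? k + 2) && (h' =? h - 2) && (0 <=? k))%Z%bool eqn:E;
      [|lra].
    rewrite !Bool.andb_true_iff, !Z.eqb_eq in E. destruct E as [[-> ->] _].
    assert (Hpot : potential n (k, h) = up_weight (k + h) (h - 2) * potential n (k + 2, h - 2)%Z).
    { replace (k + h)%Z with (k + 2 + (h - 2))%Z by ring.
      rewrite <- potential_up by lia. f_equal; f_equal; ring. }
    assert (Hw : bracket (IZR h) / bracket (IZR (Z.max k (Z.abs h))) = / up_weight (k + h) h).
    { unfold up_weight. replace (k + h - h)%Z with k by ring.
      pose proof (bracket_ge1 (IZR h)). pose proof (bracket_ge1 (IZR (Z.max k (Z.abs h)))).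
      field. lra. }
    unfold r. rewrite Hw, Hpot.
    pose proof (up_weight_pred_le (k + h) h). pose proof (up_weight_ge1 (k + h) (h - 2)).
    pose proof (up_weight_ge1 (k + h) h).
    replace (9 * (potential n (k + 2, h - 2)%Z
                  / (up_weight (k + h) (h - 2) * potential n (k + 2, h - 2)%Z)))
      with (9 / up_weight (k + h) (h - 2)) by (field; lra).
    apply Rmult_le_reg_r with (up_weight (k + h) h * up_weight (k + h) (h - 2)); [nra|].
    field_simplify; lra. }
  lra.
Qed.

Lemma G2_le_potential_ratio n p q : (- n <= snd p)%Z ->
  G2 p q <= potential n q / potential n p.
Proof.
  intros Hp. pose proof (potential_ge1 n p). pose proof (potential_ge1 n q).
  unfold G2. destruct excluded_middle_informative as [E|];
    [|left; apply Rdiv_lt_0_compat; lra].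
  pose proof (potential_G2_mono n p q E ltac:(lia)).
  apply Rmult_le_reg_r with (potential n p); [lra|].
  unfold Rdiv. rewrite Rmult_assoc, Rinv_l by lra. lra.
Qed.

Lemma Gsum_le_potential_ratio n p q : (- n <= snd p)%Z -> (- n <= snd q)%Z ->
  Gsum G1 G2 p q <= 12 * (potential n q / potential n p).
Proof.
  intros Hp Hq. unfold Gsum.
  pose proof (G1_le_potential_ratio n p q Hp Hq).
  pose proof (G2_le_potential_ratio n p q Hp). lra.
Qed.

Lemma path_weight_pos G p l : is_path G p l -> forall m, (m <= l)%nat -> 0 < path_weight G p m.
Proof.
  intros Hpath m; induction m as [|m IH]; intros Hm; simpl; [lra|].
  pose proof (Hpath (S m) ltac:(lia)) as Hedge. rewrite Nat.sub_succ, Nat.sub_0_r in Hedge.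
  apply Rmult_lt_0_compat; [apply IH; lia | exact Hedge].
Qed.

Lemma path_weight_le_telescope G (Phi : Z * Z -> R) c p l :
  is_path G p l ->
  (forall i, (i <= l)%nat -> 0 < Phi (p i)) ->
  (forall i, (1 <= i <= l)%nat -> G (p (i - 1)%nat) (p i) <= c * (Phi (p i) / Phi (p (i - 1)%nat))) ->
  path_weight G p l <= c ^ l * (Phi (p l) / Phi (p O)).
Proof.
  intros Hpath Hpos Hstep.
  assert (H : forall m, (m <= l)%nat -> path_weight G p m <= c ^ m * (Phi (p m) / Phi (p O))).
  { intros m; induction m as [|m IH]; intros Hm; simpl.
    - pose proof (Hpos O ltac:(lia)). right. field. lra.
    - pose proof (Hstep (S m) ltac:(lia)) as Hedge. rewrite Nat.sub_succ, Nat.sub_0_r in Hedge.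
      pose proof (Hpath (S m) ltac:(lia)) as Hpos_edge. rewrite Nat.sub_succ, Nat.sub_0_r in Hpos_edge.
      pose proof (path_weight_pos G p l Hpath m ltac:(lia)).
      pose proof (Hpos O ltac:(lia)). pose proof (Hpos m ltac:(lia)).
      apply Rle_trans with (c ^ m * (Phi (p m) / Phi (p O)) * (c * (Phi (p (S m)) / Phi (p m)))).
      + apply Rmult_le_compat; try lra. apply IH. lia.
      + right. field. lra. }
  apply H. lia.
Qed.

Lemma pnorm_ge_abs x : IZR (Z.abs (fst x)) <= pnorm x /\ IZR (Z.abs (snd x)) <= pnorm x.
Proof.
  unfold pnorm. rewrite !abs_IZR, <- !sqrt_Rsqr_abs.
  split; apply sqrt_le_1_alt; unfold Rsqr; simpl; nra.
Qed.

Lemma path_max_ge_pnorm p l i : (i <= l)%nat -> pnorm (p i) <= path_max p l.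
Proof.
  induction l as [|l IH]; intros Hi; simpl.
  - replace i with O by lia. lra.
  - destruct (Nat.eq_dec i (S l)) as [->|Hne]; [apply Rmax_r|].
    apply Rle_trans with (path_max p l); [apply IH; lia | apply Rmax_l].
Qed.

Lemma Zabs_le_Zfloor_path_max p l i : (i <= l)%nat ->
  (Z.abs (fst (p i)) <= Zfloor (path_max p l))%Z /\
  (Z.abs (snd (p i)) <= Zfloor (path_max p l))%Z.
Proof.
  intros Hi. pose proof (path_max_ge_pnorm p l i Hi). destruct (pnorm_ge_abs (p i)).
  split; apply Zfloor_lub; lra.
Qed.

Lemma path_weight_le_exp n p l :
  is_path (Gsum G1 G2) p l ->
  (forall i, (i <= l)%nat -> (Z.abs (fst (p i)) <= n)%Z /\ (Z.abs (snd (p i)) <= n)%Z) ->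
  path_weight (Gsum G1 G2) p l <= 12 ^ l * exp (1 + 3 * IZR n).
Proof.
  intros Hpath Hbound.
  pose proof (potential_ge1 n (p O)). pose proof (potential_ge1 n (p l)).
  apply Rle_trans with (12 ^ l * (potential n (p l) / potential n (p O))).
  { apply path_weight_le_telescope; auto.
    - intros i _. pose proof (potential_ge1 n (p i)). lra.
    - intros i Hi. destruct (Hbound i), (Hbound (i - 1)%nat); try lia.
      apply Gsum_le_potential_ratio; lia. }
  apply Rmult_le_compat_l; [apply pow_le; lra|].
  apply Rle_trans with (potential n (p l)).
  - apply Rmult_le_reg_r with (potential n (p O)); [lra|].
    unfold Rdiv. rewrite Rmult_assoc, Rinv_l by lra. nra.
  - destruct (p l) as [k h] eqn:E. destruct (Hbound l ltac:(lia)) as [Hk Hh].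
    rewrite E in Hk, Hh. now apply potential_le_exp.
Qed.

Lemma pow_12_le_exp m : 12 ^ m <= exp (6 * INR m).
Proof.
  apply Rle_trans with (exp 6 ^ m).
  - apply pow_incr. pose proof (pow_div_fact_le_exp 6 2 ltac:(lra)). simpl in *. lra.
  - rewrite <- Rpower_pow by apply exp_pos. unfold Rpower. rewrite ln_exp.
    right. f_equal. ring.
Qed.

Theorem mainTheorem10 :
  exists C2 : R, C2 > 0 /\
    forall (l : nat) (p : nat -> Z * Z),
      is_path (Gsum G1 G2) p l ->
      path_weight (Gsum G1 G2) p l <= Rpower C2 (INR l + path_max p l).
Proof.
  exists (exp 7). split; [apply exp_pos|]. intros l p Hpath.
  pose proof (Zabs_le_Zfloor_path_max p l) as Hbound.
  set (n := Zfloor (path_max p l)) in Hbound.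
  assert (HnM : IZR n <= path_max p l) by apply Zfloor_bound.
  assert (Hn0 : 0 <= IZR n) by (apply IZR_le; destruct (Hbound O ltac:(lia)); lia).
  unfold Rpower. rewrite ln_exp.
  destruct l as [|m].
  - change (path_weight _ p 0) with 1. rewrite Rplus_0_l.
    pose proof (exp_ineq1_le (path_max p 0 * 7)). lra.
  - apply Rle_trans with (exp (6 * INR (S m)) * exp (1 + 3 * IZR n)).
    { apply Rle_trans with (12 ^ S m * exp (1 + 3 * IZR n)).
      - now apply path_weight_le_exp.
      - apply Rmult_le_compat_r; [left; apply exp_pos | apply pow_12_le_exp]. }
    rewrite <- exp_plus. apply exp_le_compat.
    pose proof (pos_INR m). rewrite S_INR. lra.
Qed.
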